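(* For any prime $p>3$, $$\binom{\frac12p-1}{p-1}\binom{2p-1}{p-1}\equiv 1-\frac7{12}p^3B_{p-3}\pmod{p^4}.$$
   Context: For rational $x$ and integer $n\ge0$, $\binom{x}{n}=\frac{x(x-1)\cdots(x-n+1)}{n!}$. $B_0,B_1,\dots$ are the Bernoulli numbers. A congruence $a\equiv b\pmod{p^m}$ between rational numbers means that $(a-b)/p^m$ is a rational number whose denominator is not divisible by $p$. *)

From HB Require Import structures.
From mathcomp Require Import all_boot all_order all_algebra.
Set Implicit Arguments. Unset Strict Implicit. Unset Printing Implicit Defensive.
Import Order.TTheory GRing.Theory Num.Theory.
Local Open Scope ring_scope.

Definition binq (x : rat) (n : nat) : rat :=
  (\prod_(i < n) (x - i%:R)) / (n`!)%:R.

(* Bernoulli numbers via the standard recurrence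
   sum_{k=0}^{n} C(n+1,k) B_k = 0 (n >= 1), B_0 = 1 (so B_1 = -1/2).
   bern_seq n = [:: B_0; ...; B_n]. *)
Fixpoint bern_seq (n : nat) : seq rat :=
  match n with
  | 0%N => [:: 1]
  | n'.+1 =>
      let s := bern_seq n' in
      rcons s (- ((n'.+2)%:R)^-1 *
               \sum_(k < n'.+1) ('C(n'.+2, k))%:R * nth 0 s k)
  end.

Definition bernoulli (n : nat) : rat := nth 0 (bern_seq n) n.

Definition congr_mod_pow (p m : nat) (a b : rat) : Prop :=
  ~~ (p%:Z %| denq ((a - b) / (p ^ m)%:R))%Z.

(* 1. Both binomials are products, so the left side is prod_(m=1)^(p-1) f(m) with
      f(m) = (p/2 - m)(2p - m)/m^2.  Pairing m with p - m gives
      f(y) f(p - y) = 1 + p^2 c(y), where c(y) = 7/4 u(y) - p^2 u(y)^2 / 2 and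
      u(y) = 1/(y(p - y)); hence the product is 1 + 7/4 p^2 sum_(y<=(p-1)/2) u(y) mod p^4.
   2. Modulo p^2, u(y) = -1/y^2 - p/y^3.  Computing sum_(m<p) 1/m^2 once by pairing m
      with p - m and once by separating even and odd m eliminates sum 1/y^2 and gives
      sum_(y<=(p-1)/2) u(y) = p/6 sum_(y<=(p-1)/2) 1/y^3  (mod p^2).
   3. By Fermat, 1/y^3 = y^(p-4) (mod p).  The same two pairings applied to the power sum
      sum_(m<p) m^(p-3), which is p B_(p-3) mod p^2 by Faulhaber's formula, give
      sum_(y<=(p-1)/2) y^(p-4) = -2 B_(p-3)  (mod p). *)

From HB Require Import structures.
From mathcomp Require Import all_boot all_order all_algebra.
From mathcomp Require Import ring zify.
Import Order.TTheory GRing.Theory Num.Theory.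
Local Open Scope ring_scope.

Lemma size_bern_seq n : size (bern_seq n) = n.+1.
Proof. by elim: n => //= n IH; rewrite size_rcons IH. Qed.

Lemma nth_bern_seq n k : (k <= n)%N -> nth 0 (bern_seq n) k = bernoulli k.
Proof.
elim: n => [|n IH]; first by rewrite leqn0 => /eqP ->.
rewrite leq_eqVlt => /orP [/eqP -> //|hk].
by rewrite /= nth_rcons size_bern_seq hk IH.
Qed.

Lemma bernoulliS n : bernoulli n.+1 =
  - ((n.+2)%:R)^-1 * \sum_(k < n.+1) ('C(n.+2, k))%:R * bernoulli k.
Proof.
rewrite {1}/bernoulli /= nth_rcons size_bern_seq ltnn eqxx.
by congr (_ * _); apply: eq_bigr => k _; rewrite nth_bern_seq // -ltnS.
Qed.

Lemma bernoulli_binomial_sum m : \sum_(i < m.+1) ('C(m, i))%:R * bernoulli i =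
  bernoulli m + (m == 1)%N%:R.
Proof.
case: m => [|[|n]].
- by rewrite big_ord1 bin0 mul1r addr0.
- by rewrite !big_ord_recr big_ord0 /= add0r !mul1r addrC.
- rewrite big_ord_recr big_ord_recr /= binn binSn (bernoulliS n) mul1r addr0.
  by rewrite mulrA mulrN mulfV ?pnatr_eq0 // mulN1r addrN add0r.
Qed.

Lemma sum_widen (n N : nat) (F : nat -> rat) : (n <= N)%N ->
  (forall i, (n <= i)%N -> (i < N)%N -> F i = 0) ->
  \sum_(i < N) F i = \sum_(i < n) F i.
Proof.
move=> hn hF; rewrite (big_ord_widen N F hn) [RHS]big_mkcond /=.
rewrite big_mkcond /=; apply: eq_bigr => i _.
by case: ltnP => // h; rewrite hF.
Qed.

Lemma sum_rev (n : nat) (F : nat -> rat) :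
  \sum_(i < n) F i = \sum_(i < n) F (n - i.+1)%N.
Proof. by rewrite -(big_mkord xpredT) big_rev_mkord subn0. Qed.

Lemma sum_pair_complements h (F : nat -> rat) : \sum_(m < h.*2) F m.+1 =
  \sum_(j < h) (F j.+1 + F (h.*2.+1 - j.+1)%N).
Proof.
rewrite big_split /= -[in LHS]addnn big_split_ord /=; congr (_ + _).
rewrite (sum_rev _ (fun j => F (h + j).+1)); apply: eq_bigr => j _.
by congr F; have := ltn_ord j; lia.
Qed.

Lemma prod_pair_complements h (F : nat -> rat) : \prod_(m < h.*2) F m.+1 =
  \prod_(j < h) (F j.+1 * F (h.*2.+1 - j.+1)%N).
Proof.
rewrite big_split /= -[in LHS]addnn big_split_ord /=; congr (_ * _).
rewrite -(big_mkord xpredT (fun j => F (h + j).+1)) big_rev_mkord subn0.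
by apply: eq_bigr => j _; congr F; have := ltn_ord j; lia.
Qed.

Lemma sum_pair_parity h (F : nat -> rat) : \sum_(m < h.*2) F m.+1 =
  \sum_(j < h) (F (j.+1).*2 + F (h.*2.+1 - (j.+1).*2)%N).
Proof.
have -> : \sum_(m < h.*2) F m.+1 = \sum_(j < h) (F j.*2.+2 + F j.*2.+1).
  elim: h => [|h IH]; first by rewrite !big_ord0.
  by rewrite doubleS !big_ord_recr /= IH -!addrA; congr (_ + _); exact: addrC.
rewrite !big_split /=; congr (_ + _).
rewrite (sum_rev _ (fun j => F j.*2.+1)); apply: eq_bigr => j _.
by congr F; have := ltn_ord j; lia.
Qed.

Lemma trinomial_fact n i l : (i + l <= n)%N ->
  ('C(n, i) * 'C(n - i, l) * (i`! * l`! * (n - i - l)`!) = n`!)%N.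
Proof.
move=> h; have -> : ('C(n, i) * 'C(n - i, l) * (i`! * l`! * (n - i - l)`!) =
    'C(n, i) * (i`! * ('C(n - i, l) * (l`! * (n - i - l)`!))))%N by ring.
by rewrite bin_fact ?bin_fact //; lia.
Qed.
Lemma bin_swap n i l : ('C(n, i) * 'C(n - i, l) = 'C(n, l) * 'C(n - l, i))%N.
Proof.
case: (leqP (i + l) n) => h; last first.
  have z a b : (n < a + b)%N -> ('C(n, a) * 'C(n - a, b) = 0)%N.
    move=> hab; case: (leqP a n) => ha; last by rewrite bin_small.
    by rewrite (@bin_small (n - a)) ?muln0 //; lia.
  by rewrite !z //; lia.
have K : (0 < i`! * l`! * (n - i - l)`!)%N by rewrite !muln_gt0 !fact_gt0.
apply/eqP; rewrite -(eqn_pmul2r K) trinomial_fact //.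
rewrite (mulnC i`!) (_ : n - i - l = n - l - i)%N ?trinomial_fact //; lia.
Qed.

Definition faulhaber_poly (k : nat) (x : rat) : rat :=
  \sum_(i < k.+2) ('C(k.+1, i))%:R * bernoulli i * x ^+ (k.+1 - i).

Lemma expD1_widen n N (x : rat) : (n < N)%N ->
  (x + 1) ^+ n = \sum_(l < N) ('C(n, l))%:R * x ^+ l.
Proof.
move=> hn; rewrite exprD1n (@sum_widen _ _ (fun l => ('C(n, l))%:R * x ^+ l) hn).
  by apply: eq_bigr => i _; rewrite mulr_natl.
by move=> i hi _; rewrite bin_small // mul0r.
Qed.

(* Expanding G_k(x + 1) in powers of x, using the binomial transform of B. *)
Lemma faulhaber_poly_shift k x : faulhaber_poly k (x + 1) = \sum_(l < k.+2)
   ('C(k.+1, l))%:R * x ^+ l * (bernoulli (k.+1 - l) + ((k.+1 - l) == 1)%N%:R).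
Proof.
rewrite /faulhaber_poly (eq_bigr (fun i : 'I_k.+2 => \sum_(l < k.+2)
    ('C(k.+1, i))%:R * bernoulli i * (('C(k.+1 - i, l))%:R * x ^+ l))); last first.
  by move=> i _; rewrite (@expD1_widen _ k.+2) ?mulr_sumr //; lia.
rewrite exchange_big /=; apply: eq_bigr => l _.
rewrite -bernoulli_binomial_sum mulr_sumr.
have hkl : ((k.+1 - l).+1 <= k.+2)%N by lia.
rewrite -[RHS](@sum_widen _ _ (fun i => ('C(k.+1, l))%:R * x ^+ l *
    (('C(k.+1 - l, i))%:R * bernoulli i)) hkl); last first.
  by move=> i hi _; rewrite (@bin_small (k.+1 - l) i) // mul0r mulr0.
apply: eq_bigr => i _.
have e := congr1 (fun n => n%:R : rat) (bin_swap k.+1 i l); rewrite /= !natrM in e.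
transitivity ((('C(k.+1, i))%:R * ('C(k.+1 - i, l))%:R) * bernoulli i * x ^+ l); first by ring.
by rewrite e; ring.
Qed.

Lemma faulhaber_poly_rev k x : faulhaber_poly k x =
  \sum_(l < k.+2) ('C(k.+1, l))%:R * x ^+ l * bernoulli (k.+1 - l).
Proof.
rewrite /faulhaber_poly (sum_rev _ (fun i => ('C(k.+1, i))%:R * bernoulli i * x ^+ (k.+1 - i))).
apply: eq_bigr => l _; have hl : (l <= k.+1)%N by rewrite -ltnS.
rewrite (_ : k.+2 - l.+1 = k.+1 - l)%N; last by lia.
by rewrite subKn // bin_sub //; ring.
Qed.

Lemma faulhaber_poly_step k x :
  faulhaber_poly k (x + 1) - faulhaber_poly k x = (k.+1)%:R * x ^+ k.
Proof.
rewrite faulhaber_poly_shift faulhaber_poly_rev -sumrB.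
under eq_bigr => l _ do rewrite mulrDr addrC addKr.
rewrite !big_ord_recr /= big1; last first.
  move=> [l hl] _ /=.
  by rewrite (_ : (k.+1 - l == 1)%N = false) ?mulr0 //; apply/negbTE; lia.
by rewrite subnn subSnn /= binSn add0r mulr1 mulr0 addr0.
Qed.

Lemma faulhaber k n :
  (k.+1)%:R * \sum_(m < n) (m%:R : rat) ^+ k = faulhaber_poly k n%:R - faulhaber_poly k 0.
Proof.
elim: n => [|n IH]; first by rewrite big_ord0 mulr0 subrr.
rewrite big_ord_recr /= mulrDr IH -[n.+1]addn1 natrD -(faulhaber_poly_step k n%:R).
by ring.
Qed.

Section PIntegral.
Variable p : nat.
Hypothesis p_prime : prime p.

Definition pint (x : rat) : bool := ~~ (p %| `|denq x|)%N.

Lemma pint_frac (a : int) (b : nat) : ~~ (p %| b)%N -> pint (a%:~R / b%:R).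
Proof.
rewrite /pint => hb; apply: contra hb; set y := (a%:~R / b%:R : rat) => hd.
have b0 : b != 0%N.
  apply/negP => /eqP b0; move: hd; rewrite /y b0 invr0 mulr0 /= dvdn1.
  by rewrite gtn_eqF ?prime_gt1.
have e : numq y * b%:Z = a * denq y.
  apply: (@intr_inj rat); rewrite !rmorphM /= numqE -[a%:~R](divfK (_ : b%:R != 0)) //.
    by rewrite -/y -!mulrA (mulrC (denq y)%:~R).
  by rewrite pnatr_eq0.
have : (`|denq y| %| `|numq y| * b)%N.
  have -> : (`|numq y| * b)%N = `|(numq y * b%:Z)%R|%N by rewrite abszM.
  by rewrite e abszM dvdn_mull.
by rewrite Gauss_dvdr 1?coprime_sym ?coprime_num_den //; apply: dvdn_trans.
Qed.

Lemma pintP x : pint x -> exists (a : int) (b : nat), ~~ (p %| b)%N /\ x = a%:~R / b%:R.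
Proof.
move=> hx; exists (numq x), `|denq x|%N; split => //.
by rewrite -[in LHS](divq_num_den x) -{1}absz_denq.
Qed.

Lemma pint_int (a : int) : pint a%:~R.
Proof.
by rewrite -[_%:~R]divr1 -[1]/(1%:R) pint_frac // dvdn1 gtn_eqF ?prime_gt1.
Qed.

Lemma pint_nat (n : nat) : pint n%:R.
Proof. exact: (pint_int n). Qed.

Lemma pint0 : pint 0. Proof. exact: (pint_nat 0). Qed.
Lemma pint1 : pint 1. Proof. exact: (pint_nat 1). Qed.

Lemma ndvd_natr_neq0 (b : nat) : ~~ (p %| b)%N -> b%:R != 0 :> rat.
Proof. by rewrite pnatr_eq0; apply: contraNneq => ->; rewrite dvdn0. Qed.

Lemma pintD [x y : rat] : pint x -> pint y -> pint (x + y).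
Proof.
move=> /pintP [a1 [b1 [h1 ->]]] /pintP [a2 [b2 [h2 ->]]].
have -> : a1%:~R / b1%:R + a2%:~R / b2%:R =
    (a1 * b2%:Z + a2 * b1%:Z)%:~R / (b1 * b2)%N%:R :> rat.
  rewrite natrM rmorphD !rmorphM /=; field.
  by rewrite !ndvd_natr_neq0.
by rewrite pint_frac // Euclid_dvdM // negb_or h1 h2.
Qed.

Lemma pintM [x y : rat] : pint x -> pint y -> pint (x * y).
Proof.
move=> /pintP [a1 [b1 [h1 ->]]] /pintP [a2 [b2 [h2 ->]]].
have -> : a1%:~R / b1%:R * (a2%:~R / b2%:R) = (a1 * a2)%:~R / (b1 * b2)%N%:R :> rat.
  by rewrite natrM rmorphM /= invfM mulrACA.
by rewrite pint_frac // Euclid_dvdM // negb_or h1 h2.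
Qed.

Lemma pintN [x : rat] : pint x -> pint (- x).
Proof. by rewrite /pint denqN. Qed.

Lemma pintB [x y : rat] : pint x -> pint y -> pint (x - y).
Proof. by move=> hx hy; rewrite pintD ?pintN. Qed.

Lemma pintX [x : rat] (n : nat) : pint x -> pint (x ^+ n).
Proof. by move=> hx; elim: n => [|n IH]; rewrite ?expr0 ?pint1 // exprS pintM. Qed.

Lemma pint_sum (I : Type) (r : seq I) (P : pred I) (F : I -> rat) :
  (forall i, P i -> pint (F i)) -> pint (\sum_(i <- r | P i) F i).
Proof.
move=> h; elim/big_rec: _ => [|i x Pi hx]; first exact: pint0.
by rewrite pintD ?h.
Qed.

Lemma pint_invn (b : nat) : ~~ (p %| b)%N -> pint (b%:R)^-1.
Proof. by move=> hb; rewrite -[_^-1]mul1r -[1]/(1%:~R) pint_frac. Qed.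

Lemma ndvd_small [m : nat] : (0 < m < p)%N -> ~~ (p %| m)%N.
Proof. by move=> /andP [h0 h1]; apply/negP => /(dvdn_leq h0); lia. Qed.

Lemma pint_inv_small (m : nat) : (0 < m < p)%N -> pint (m%:R)^-1.
Proof. by move=> hm; rewrite pint_invn ?ndvd_small. Qed.

Lemma pnatr_neq0 : p%:R != 0 :> rat.
Proof. by rewrite pnatr_eq0 -lt0n prime_gt0. Qed.

Definition cong (m : nat) (x y : rat) : Prop := pint ((x - y) / (p%:R ^+ m)).

Lemma congr_mod_powE m x y : congr_mod_pow p m x y <-> cong m x y.
Proof. by rewrite /cong /pint /congr_mod_pow dvdzE natrX. Qed.

Lemma cong_refl m x : cong m x x.
Proof. by rewrite /cong subrr mul0r pint0. Qed.

Lemma cong_sym [m : nat] [x y : rat] : cong m x y -> cong m y x.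
Proof. by rewrite /cong -opprB mulNr => /pintN; rewrite opprK. Qed.

Lemma cong_trans [m : nat] [x y z : rat] : cong m x y -> cong m y z -> cong m x z.
Proof. by move=> h1 h2; have := pintD h1 h2; rewrite -mulrDl addrA subrK. Qed.

Lemma cong_rearr [m : nat] [a b x y : rat] (c : rat) :
  pint c -> cong m a b -> x - y = c * (a - b) -> cong m x y.
Proof. by move=> hc h e; rewrite /cong e -mulrA; apply: pintM. Qed.

Lemma cong_of_eq m x y z : pint z -> x - y = p%:R ^+ m * z -> cong m x y.
Proof.
move=> hz e; rewrite /cong e mulrC mulrA mulVf ?mul1r //.
by rewrite expf_neq0 // pnatr_neq0.
Qed.

Lemma congD [m : nat] [x y u v : rat] :
  cong m x y -> cong m u v -> cong m (x + u) (y + v).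
Proof.
move=> h1 h2; have := pintD h1 h2; rewrite /cong -mulrDl.
by have -> : x - y + (u - v) = x + u - (y + v) by ring.
Qed.

Lemma congN [m : nat] [x y : rat] : cong m x y -> cong m (- x) (- y).
Proof. by move=> h; apply: (cong_rearr (-1) (pintN pint1) h); ring. Qed.

Lemma congB [m : nat] [x y u v : rat] :
  cong m x y -> cong m u v -> cong m (x - u) (y - v).
Proof. by move=> h1 h2; apply: congD => //; apply: congN. Qed.

Lemma congMl [m : nat] [c x y : rat] : pint c -> cong m x y -> cong m (c * x) (c * y).
Proof. by move=> hc h; apply: (cong_rearr c hc h); ring. Qed.

Lemma congMr [m : nat] [c x y : rat] : pint c -> cong m x y -> cong m (x * c) (y * c).
Proof. by rewrite ![_ * c]mulrC; apply: congMl. Qed.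

Lemma cong_sum m (I : Type) (r : seq I) (P : pred I) (F G : I -> rat) :
  (forall i, P i -> cong m (F i) (G i)) ->
  cong m (\sum_(i <- r | P i) F i) (\sum_(i <- r | P i) G i).
Proof.
move=> h; elim/big_rec2: _ => [|i x y Pi hxy]; first exact: cong_refl.
by apply: congD => //; apply: h.
Qed.

Lemma cong_pmul m x y : cong m x y <-> cong m.+1 (p%:R * x) (p%:R * y).
Proof.
have hpm : p%:R ^+ m != 0 :> rat by rewrite expf_neq0 // pnatr_neq0.
rewrite /cong exprS -mulrBr.
by have -> : p%:R * (x - y) / (p%:R * p%:R ^+ m) = (x - y) / p%:R ^+ m
  by field; rewrite pnatr_neq0 hpm.
Qed.

Lemma cong_mulpX [m : nat] (k : nat) [x y : rat] :
  cong m x y -> cong (m + k) (p%:R ^+ k * x) (p%:R ^+ k * y).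
Proof.
elim: k => [|k IH]; first by rewrite addn0 expr0 !mul1r.
by move=> h; rewrite addnS exprS -!mulrA; apply: (proj1 (cong_pmul _ _ _)); apply: IH.
Qed.

Lemma fermat_cong [j : nat] : ~~ (p %| j)%N -> cong 1 ((j%:R : rat) ^+ p.-1) 1.
Proof.
move=> hj; have hj0 : (0 < j)%N by case: j hj => //; rewrite dvdn0.
have [q hq] : exists q, (j ^ p.-1 = q * p + 1)%N.
  have := fermat_little j p_prime; rewrite -{1}(prednK (prime_gt0 p_prime)) expnS.
  move/eqP; rewrite eqn_mod_dvd ?leq_pmulr ?expn_gt0 ?hj0 //.
  rewrite (_ : j * j ^ p.-1 - j = j * (j ^ p.-1 - 1))%N; last by rewrite mulnBr muln1.
  rewrite Euclid_dvdM // (negPf hj) /= => /dvdnP [q hq].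
  by exists q; rewrite -hq subnK // expn_gt0 hj0.
apply: (@cong_of_eq _ _ _ q%:R); first exact: pint_nat.
by rewrite -natrX hq natrD natrM addrK expr1 mulrC.
Qed.

(* B_i is p-integral for i < p - 1: the recurrence only divides by integers below p. *)
Lemma pint_bernoulli i : (i < p.-1)%N -> pint (bernoulli i).
Proof.
elim/ltn_ind: i => [[|n]] IH hn; first exact: pint1.
rewrite bernoulliS pintM ?pintN ?pint_inv_small //; first by lia.
apply: pint_sum => k _; rewrite pintM ?pint_nat ?IH //; have := ltn_ord k; lia.
Qed.

Lemma power_sum_cong k : (k.+1 < p)%N ->
  cong 2 (\sum_(m < p) (m%:R : rat) ^+ k) (p%:R * bernoulli k).
Proof.
move=> hk; have hkinv : pint ((k.+1)%:R)^-1 by rewrite pint_inv_small.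
have e : (k.+1)%:R * \sum_(m < p) (m%:R : rat) ^+ k - (k.+1)%:R * (p%:R * bernoulli k) =
    p%:R ^+ 2 * \sum_(i < k) ('C(k.+1, i))%:R * bernoulli i * p%:R ^+ (k.+1 - i - 2).
  rewrite faulhaber /faulhaber_poly -sumrB !big_ord_recr /= !subnn subSnn !expr0 !expr1.
  rewrite subrr addr0 binSn mulr_sumr mulr0 subr0 -mulrA (mulrC (bernoulli k)) addrK.
  apply: eq_bigr => i _; rewrite expr0n (_ : (k.+1 - i == 0)%N = false); last first.
    by apply/negbTE; have := ltn_ord i; lia.
  rewrite mulr0 subr0 mulrCA -exprD; congr (_ * _ ^+ _); have := ltn_ord i; lia.
have c : cong 2 ((k.+1)%:R * \sum_(m < p) (m%:R : rat) ^+ k) ((k.+1)%:R * (p%:R * bernoulli k)).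
  apply: cong_of_eq e; apply: pint_sum => i _.
  by rewrite !pintM ?pintX ?pint_nat ?pint_bernoulli //; have := ltn_ord i; lia.
have := congMl hkinv c; rewrite !mulrA mulVf ?mul1r //.
by rewrite pnatr_eq0.
Qed.

Lemma prod_one_plus_p2_cong n (c : nat -> rat) : (forall j, (j < n)%N -> pint (c j)) ->
  cong 4 (\prod_(j < n) (1 + p%:R ^+ 2 * c j)) (1 + p%:R ^+ 2 * \sum_(j < n) c j).
Proof.
elim: n => [|n IH] hc; first by rewrite !big_ord0 mulr0 addr0; exact: cong_refl.
rewrite !big_ord_recr /=.
have hpc : pint (1 + p%:R ^+ 2 * c n) by rewrite pintD ?pint1 ?pintM ?pintX ?pint_nat ?hc ?ltnSn.
apply: (cong_trans (congMr hpc (IH (fun j hj => hc j (ltnW hj))))).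
apply: (@cong_of_eq _ _ _ ((\sum_(i < n) c i) * c n)); last by ring.
rewrite pintM ?hc //; apply: pint_sum => i _.
exact: (hc _ (leqW (ltn_ord i))).
Qed.

Lemma pow_sub_p_cong (x : rat) n : pint x ->
  cong 2 ((x - p%:R) ^+ n) (x ^+ n - n%:R * p%:R * x ^+ n.-1).
Proof.
move=> hx; elim: n => [|n IH]; first by rewrite !expr0 !mul0r subr0; exact: cong_refl.
rewrite exprS; apply: (@cong_trans _ _ ((x - p%:R) * (x ^+ n - n%:R * p%:R * x ^+ n.-1))).
  by apply: congMl => //; rewrite pintB ?pint_nat.
case: n IH => [|n] IH.
  by rewrite !expr0 !mul0r !subr0 !mulr1 mul1r expr1; exact: cong_refl.
apply: (@cong_of_eq _ _ _ (n.+1%:R * x ^+ n)); first by rewrite pintM ?pintX ?pint_nat.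
by rewrite /= !exprS; ring.
Qed.

Lemma pow_reflect_cong (y n : nat) : ~~ odd n -> (y <= p)%N ->
  cong 2 ((p - y)%:R ^+ n) (y%:R ^+ n - n%:R * p%:R * y%:R ^+ n.-1).
Proof.
move=> hn hy; rewrite natrB // -opprB exprNn -signr_odd (negPf hn) expr0 mul1r.
by apply: pow_sub_p_cong; apply: pint_nat.
Qed.

Lemma pint_invX (x n : nat) : (0 < x < p)%N -> pint ((x%:R ^+ n)^-1).
Proof. by move=> hx; rewrite -exprVn pintX ?pint_inv_small. Qed.

Definition invsq (y : nat) : rat := (y%:R ^+ 2)^-1.
Definition invcube (y : nat) : rat := (y%:R ^+ 3)^-1.

Lemma invsq_reflect_cong (x : nat) : (0 < x < p)%N ->
  cong 2 (invsq (p - x)) (invsq x + 2%:R * p%:R * invcube x).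
Proof.
move=> hx; have hpx : (0 < p - x < p)%N by lia.
apply: (@cong_of_eq _ _ _ ((3%:R * x%:R - 2%:R * p%:R) * invcube x * invsq (p - x))).
  by rewrite /invsq /invcube !pintM ?pintB ?pintM ?pint_nat ?pint_invX.
have hx0 : x%:R != 0 :> rat by rewrite pnatr_eq0 -lt0n; case/andP: hx.
have : (p - x)%:R != 0 :> rat by rewrite pnatr_eq0 -lt0n; case/andP: hpx.
by rewrite /invsq /invcube natrB; [move=> hpx0; field; rewrite hx0 hpx0 | lia].
Qed.

Lemma invsq_double y : (0 < y)%N -> invsq y.*2 = invsq y / 4%:R.
Proof.
move=> hy; have y0 : y%:R != 0 :> rat by rewrite pnatr_eq0 -lt0n.
by rewrite /invsq -muln2 natrM; field; rewrite y0.
Qed.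

Lemma invcube_double y : (0 < y)%N -> invcube y.*2 = invcube y / 8%:R.
Proof.
move=> hy; have y0 : y%:R != 0 :> rat by rewrite pnatr_eq0 -lt0n.
by rewrite /invcube -muln2 natrM; field; rewrite y0.
Qed.

Section SunCongruence.
Hypothesis p_gt3 : (3 < p)%N.

Let h := p./2.
Let k := (p - 3)%N.

Lemma p_double_half : h.*2.+1 = p.
Proof.
have ho : odd p by case: (even_prime p_prime) => // e; move: p_gt3; rewrite e.
by rewrite -[RHS](odd_double_half p) ho add1n.
Qed.

Lemma half_range (j : 'I_h) : (0 < j.+1 < p)%N.
Proof. by have := ltn_ord j; have := p_double_half; lia. Qed.

Lemma half_range_double (j : 'I_h) : (0 < (j.+1).*2 < p)%N.
Proof. by have := ltn_ord j; have := p_double_half; lia. Qed.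

(* Since p > 3, the divisors of 12 are invertible modulo p. *)
Lemma pint_inv_dvd12 (n : nat) : (n %| 12)%N -> pint (n%:R)^-1.
Proof.
move=> hn; apply: pint_invn; apply/negP => /dvdn_trans /(_ hn).
by rewrite (_ : 12 = 2 * (2 * 3))%N // !Euclid_dvdM // => /or3P [] /dvdn_leq; lia.
Qed.

Let S2 := \sum_(j < h) invsq j.+1.
Let S3 := \sum_(j < h) invcube j.+1.
Let H2 := \sum_(m < h.*2) invsq m.+1.

Lemma harm2_by_complements : cong 2 H2 (2%:R * S2 + 2%:R * p%:R * S3).
Proof.
rewrite /H2 sum_pair_complements p_double_half /S2 /S3 !mulr_sumr -big_split /=.
apply: cong_sum => j _.
apply: (@cong_trans _ _ (invsq j.+1 + (invsq j.+1 + 2%:R * p%:R * invcube j.+1))).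
  by apply: congD; [exact: cong_refl | exact/invsq_reflect_cong/half_range].
rewrite (_ : _ + (_ + _) = 2%:R * invsq j.+1 + 2%:R * p%:R * invcube j.+1); last by ring.
exact: cong_refl.
Qed.

Lemma harm2_by_parity : cong 2 H2 (S2 / 2%:R + p%:R * S3 / 4%:R).
Proof.
rewrite /H2 sum_pair_parity p_double_half /S2 /S3 !mulr_suml mulr_sumr mulr_suml -big_split /=.
apply: cong_sum => j _.
apply: (@cong_trans _ _ (invsq (j.+1).*2 +
    (invsq (j.+1).*2 + 2%:R * p%:R * invcube (j.+1).*2))).
  by apply: congD; [exact: cong_refl | exact/invsq_reflect_cong/half_range_double].
rewrite invsq_double // invcube_double //.
rewrite (_ : _ + (_ + _) = invsq j.+1 / 2%:R + p%:R * invcube j.+1 / 4%:R); last by field.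
exact: cong_refl.
Qed.

Lemma half_harm2_cong : cong 2 S2 (- (7%:R / 6%:R) * p%:R * S3).
Proof.
apply: (cong_rearr (2%:R / 3%:R) _ (cong_trans (cong_sym harm2_by_complements)
  harm2_by_parity)); last by field.
by rewrite pintM ?pint_nat ?pint_inv_dvd12.
Qed.

Definition recip_pair (y : nat) : rat := (y%:R * (p - y)%:R)^-1.

Lemma pint_recip_pair [y : nat] : (0 < y < p)%N -> pint (recip_pair y).
Proof. by move=> hy; rewrite /recip_pair invfM pintM ?pint_inv_small //; lia. Qed.

Lemma recip_pair_cong y : (0 < y < p)%N ->
  cong 2 (recip_pair y) (- invsq y - p%:R * invcube y).
Proof.
move=> hy; have hpy : (0 < p - y < p)%N by lia.
apply: (@cong_of_eq _ _ _ (invcube y * ((p - y)%:R)^-1)).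
  by rewrite /invcube pintM ?pint_invX ?pint_inv_small.
have hy0 : y%:R != 0 :> rat by rewrite pnatr_eq0 -lt0n; case/andP: hy.
have : (p - y)%:R != 0 :> rat by rewrite pnatr_eq0 -lt0n; case/andP: hpy.
by rewrite /recip_pair /invsq /invcube natrB; [move=> hpy0; field; rewrite hy0 hpy0 | lia].
Qed.

Let Su := \sum_(j < h) recip_pair j.+1.

Lemma recip_pair_sum_harm3 : cong 2 Su (p%:R * S3 / 6%:R).
Proof.
have e1 : cong 2 Su (- S2 - p%:R * S3).
  rewrite /Su /S2 /S3 mulr_sumr -sumrN -sumrB.
  by apply: cong_sum => j _; apply/recip_pair_cong/half_range.
apply: (cong_trans e1); apply: (cong_rearr (-1) (pintN pint1) half_harm2_cong).
by field.
Qed.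

Lemma k_even : ~~ odd k.
Proof. by rewrite (_ : k = (h.-1).*2) ?odd_double //; have := p_double_half; lia. Qed.

Lemma k_pos : (0 < k)%N.
Proof. by rewrite /k; lia. Qed.

Let U := \sum_(j < h) (j.+1)%:R ^+ k : rat.
Let V := \sum_(j < h) (j.+1)%:R ^+ k.-1 : rat.
Let Sp := \sum_(m < h.*2) (m.+1)%:R ^+ k : rat.

Lemma power_sum_halves : \sum_(m < p) (m%:R : rat) ^+ k = Sp.
Proof.
by rewrite /Sp -[in LHS]p_double_half big_ord_recl /= expr0n eqn0Ngt k_pos add0r.
Qed.

Lemma power_sum_by_complements : cong 2 Sp (2%:R * U - k%:R * p%:R * V).
Proof.
rewrite /Sp (sum_pair_complements _ (fun x => x%:R ^+ k)) p_double_half /U /V.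
rewrite !mulr_sumr -sumrB; apply: cong_sum => j _.
apply: (@cong_trans _ _ ((j.+1)%:R ^+ k +
    ((j.+1)%:R ^+ k - k%:R * p%:R * (j.+1)%:R ^+ k.-1))).
  apply: congD; first exact: cong_refl.
  by apply: pow_reflect_cong k_even _; case/andP: (half_range j) => _ /ltnW.
rewrite (_ : _ + (_ - _) = 2%:R * (j.+1)%:R ^+ k - k%:R * p%:R * (j.+1)%:R ^+ k.-1).
  exact: cong_refl.
by ring.
Qed.

Lemma power_sum_by_parity :
  cong 2 Sp (2%:R ^+ k.+1 * U - k%:R * p%:R * 2%:R ^+ k.-1 * V).
Proof.
rewrite /Sp (sum_pair_parity _ (fun x => x%:R ^+ k)) p_double_half /U /V.
rewrite !mulr_sumr -sumrB; apply: cong_sum => j _.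
apply: (@cong_trans _ _ (((j.+1).*2)%:R ^+ k +
    (((j.+1).*2)%:R ^+ k - k%:R * p%:R * ((j.+1).*2)%:R ^+ k.-1))).
  apply: congD; first exact: cong_refl.
  by apply: pow_reflect_cong k_even _; case/andP: (half_range_double j) => _ /ltnW.
have two_pow : (2%:R : rat) ^+ k = 2%:R * 2%:R ^+ k.-1 by rewrite -exprS prednK // k_pos.
rewrite -muln2 natrM !exprMn two_pow exprS two_pow.
rewrite (_ : _ + (_ - _) = 2%:R * (2%:R * 2%:R ^+ k.-1) * (j.+1)%:R ^+ k -
    k%:R * p%:R * 2%:R ^+ k.-1 * (j.+1)%:R ^+ k.-1); first exact: cong_refl.
by ring.
Qed.

Let T := (2%:R : rat) ^+ k.-1.

Lemma two_pow_k : (2%:R : rat) ^+ k = 2%:R * T.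
Proof. by rewrite /T -exprS prednK // k_pos. Qed.

(* Fermat for the base 2: 2^(p-1) = 8 T = 1 (mod p). *)
Lemma eight_T_cong : cong 1 (8%:R * T) 1.
Proof.
have two_ndvd : ~~ (p %| 2)%N by rewrite ndvd_small //; lia.
have := fermat_cong two_ndvd; rewrite (_ : p.-1 = 3 + k.-1)%N; last by rewrite /k; lia.
by rewrite exprD -natrX.
Qed.

(* Eliminating U between the two pairings, and using Sp = p B_k (mod p^2):
   (2T - 1) B_k = - k T V (mod p). *)
Lemma half_power_sum_relation : cong 1 ((2%:R * T - 1) * bernoulli k) (- (k%:R * T * V)).
Proof.
have c1 := congB (congMl (pintX k (pint_nat 2)) power_sum_by_complements)
  power_sum_by_parity.
rewrite exprS two_pow_k -/T in c1.
have c2 : cong 2 ((2%:R * T - 1) * Sp) (p%:R * (- (k%:R * T * V))).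
  by apply: (cong_rearr 1 pint1 c1); ring.
have c3 : cong 2 ((2%:R * T - 1) * Sp) (p%:R * ((2%:R * T - 1) * bernoulli k)).
  rewrite -power_sum_halves mulrCA; apply: congMl.
    by rewrite pintB ?pintM ?pintX ?pint_nat ?pint1.
  by apply: power_sum_cong; rewrite /k; lia.
exact/(cong_pmul 1)/(cong_trans (cong_sym c3) c2).
Qed.

Lemma half_power_sum_cong : cong 1 V (- 2%:R * bernoulli k).
Proof.
have pint_B : pint (bernoulli k) by rewrite pint_bernoulli // /k; lia.
have pint_V : pint V by apply: pint_sum => j _; rewrite pintX ?pint_nat.
have k_cong : cong 1 k%:R (- 3%:R).
  by apply: (@cong_of_eq _ _ _ 1 pint1); rewrite /k natrB; [ring | lia].
have lhs : cong 1 (8%:R * ((2%:R * T - 1) * bernoulli k)) (- 6%:R * bernoulli k).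
  by apply: (cong_rearr (2%:R * bernoulli k) _ eight_T_cong); [rewrite pintM ?pint_nat | ring].
have rhs : cong 1 (8%:R * - (k%:R * T * V)) (3%:R * V).
  have c := cong_trans (congMl (pint_nat k) eight_T_cong) (congMr pint1 k_cong).
  by apply: (cong_rearr (- V) (pintN pint_V) c); ring.
have c := cong_trans (cong_trans (cong_sym lhs) (congMl (pint_nat 8) half_power_sum_relation)) rhs.
by apply: (cong_rearr (- 3%:R^-1) _ c); [rewrite pintN ?pint_inv_dvd12 | field].
Qed.

(* By Fermat, 1/j^3 = j^(p-4) (mod p), so S3 = V (mod p). *)
Lemma half_harm3_cong : cong 1 S3 V.
Proof.
apply: cong_sum => j _; have hj := half_range j.
have := congMl (@pint_invX _ 3 hj) (cong_sym (fermat_cong (ndvd_small hj))).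
rewrite mulr1 (_ : p.-1 = 3 + k.-1)%N ?exprD ?mulKf //; last by rewrite /k; lia.
by rewrite expf_neq0 // pnatr_eq0.
Qed.

Lemma recip_pair_sum_cong : cong 2 Su (- (p%:R * bernoulli k) / 3%:R).
Proof.
have c := proj1 (cong_pmul 1 _ _) (cong_trans half_harm3_cong half_power_sum_cong).
apply: (cong_trans recip_pair_sum_harm3).
by apply: (cong_rearr (6%:R^-1) _ c); [rewrite pint_inv_dvd12 | field].
Qed.

Definition lhs_factor (m : nat) : rat := (p%:R / 2%:R - m%:R) * (p.*2 - m)%:R / m%:R ^+ 2.

Lemma fact_prodr n : (n`!)%:R = \prod_(i < n) (i.+1)%:R :> rat.
Proof.
elim: n => [|n IH]; first by rewrite big_ord0.
by rewrite factS natrM big_ord_recr IH /= mulrC.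
Qed.

Lemma lhs_prod : binq (p%:R / 2%:R - 1) p.-1 * ('C((2 * p).-1, p.-1))%:R =
  \prod_(i < p.-1) lhs_factor i.+1.
Proof.
set P := \prod_(i < p.-1) (i.+1)%:R : rat.
have hP : (p.-1)`!%:R = P by rewrite fact_prodr.
have hP0 : P != 0 by rewrite -hP pnatr_eq0 -lt0n fact_gt0.
have e := congr1 (fun n => n%:R : rat) (bin_ffact ((2 * p).-1) p.-1).
rewrite /= natrM ffact_prod natr_prod hP in e.
rewrite -[('C(_, _))%:R](mulfK hP0) e /binq hP.
rewrite /lhs_factor big_split /= big_split /= prodfV prodrXl -/P.
rewrite (eq_bigr (fun i : 'I_p.-1 => p%:R / 2%:R - (i.+1)%:R)); last first.
  by move=> i _; rewrite mulrS; ring.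
rewrite [\prod_(i < p.-1) ((2 * p).-1 - i)%:R](eq_bigr (fun i : 'I_p.-1 =>
    (p.*2 - i.+1)%:R)); last by move=> i _; congr (_%:R); have := ltn_ord i; lia.
by field.
Qed.

Definition pair_defect (y : nat) : rat :=
  7%:R / 4%:R * recip_pair y - p%:R ^+ 2 * (recip_pair y) ^+ 2 / 2%:R.

Lemma lhs_factor_pair y : (0 < y < p)%N ->
  lhs_factor y * lhs_factor (p - y) = 1 + p%:R ^+ 2 * pair_defect y.
Proof.
move=> hy; have hy0 : y%:R != 0 :> rat by rewrite pnatr_eq0 -lt0n; case/andP: hy.
have : (p - y)%:R != 0 :> rat by rewrite pnatr_eq0 subn_eq0 -ltnNge; case/andP: hy.
rewrite /lhs_factor /pair_defect /recip_pair (_ : p.*2 - (p - y) = p + y)%N; last by lia.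
rewrite !natrB; try lia.
by rewrite natrD -mul2n natrM => hpy0; field; rewrite hy0 hpy0.
Qed.

Lemma pint_pair_defect [y : nat] : (0 < y < p)%N -> pint (pair_defect y).
Proof.
move=> hy; have hu := pint_recip_pair hy; rewrite /pair_defect.
by rewrite pintB ?pintM ?pintX ?pint_nat ?pint_inv_dvd12.
Qed.

(* Modulo p^2 only the linear term of c matters: sum c(y) = -7/12 p B_(p-3). *)
Lemma pair_defect_sum_cong :
  cong 2 (\sum_(j < h) pair_defect j.+1) (- 7%:R / 12%:R * p%:R * bernoulli k).
Proof.
have c1 : cong 2 (\sum_(j < h) pair_defect j.+1) (7%:R / 4%:R * Su).
  rewrite /Su mulr_sumr; apply: cong_sum => j _.
  apply: (@cong_of_eq _ _ _ (- (recip_pair j.+1) ^+ 2 / 2%:R)); last by rewrite /pair_defect; ring.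
  by rewrite pintM ?pintN ?pintX ?pint_recip_pair ?half_range ?pint_inv_dvd12.
have h74 : pint (7%:R / 4%:R) by rewrite pintM ?pint_nat ?pint_inv_dvd12.
apply: (cong_trans c1); apply: (cong_rearr (7%:R / 4%:R) h74 recip_pair_sum_cong).
by field.
Qed.

Theorem sun_cong : cong 4
    (binq (p%:R / 2%:R - 1) p.-1 * ('C((2 * p).-1, p.-1))%:R)
    (1 - 7%:R / 12%:R * p%:R ^+ 3 * bernoulli (p - 3)).
Proof.
rewrite lhs_prod (_ : p.-1 = h.*2); last by have := p_double_half; lia.
rewrite prod_pair_complements p_double_half.
rewrite (eq_bigr (fun j : 'I_h => 1 + p%:R ^+ 2 * pair_defect j.+1)); last first.
  by move=> j _; apply/lhs_factor_pair/half_range.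
apply: (cong_trans (@prod_one_plus_p2_cong _ (fun j => pair_defect j.+1) _)).
  by move=> j hj; apply: pint_pair_defect; have := p_double_half; lia.
apply: (cong_trans (congD (cong_refl 4 1) (cong_mulpX 2 pair_defect_sum_cong))).
rewrite (_ : 1 + p%:R ^+ 2 * _ = 1 - 7%:R / 12%:R * p%:R ^+ 3 * bernoulli k).
  exact: cong_refl.
by field.
Qed.

End SunCongruence.
End PIntegral.

Theorem mainTheorem14 (p : nat) (hp : prime p) (hp3 : (3 < p)%N) :
  congr_mod_pow p 4
    (binq (p%:R / 2 - 1) p.-1 * ('C((2 * p).-1, p.-1))%:R)
    (1 - 7%:R / 12%:R * (p%:R) ^+ 3 * bernoulli (p - 3)).
Proof. exact/congr_mod_powE/sun_cong. Qed.
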